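(* Let $G\colon Y\to X$ be a functor such that every object of $X$ has an absolute value. Let $x_0$ be a locally initial object of $X$ and let $y_0$ be an initial object of the full subcategory $Y_G(x_0)$. Then $x_0\cong |Gy_0|$ if and only if $x_0\cong|Gy|$ for some object $y$ of $Y$.
   Context: An object $x_0$ of a category $X$ is locally initial if for every object $x$ of $X$ there exists at most one morphism $x_0\to x$. For a locally initial object $x_0$ and a functor $G\colon Y\to X$, $Y_G(x_0)$ denotes the full subcategory of $Y$ of all objects $y$ such that there exists a morphism $x_0\to Gy$. For an object $x$ of $X$, an absolute value of $x$ is a locally initial object $|x|$ of $X$ admitting a morphism $|x|\to x$ such that for every locally initial object $x_1$ admitting a morphism $x_1\to x$ there exists a morphism $x_1\to|x|$; it is unique up to isomorphism. *)

Set Implicit Arguments.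

Record Category : Type := {
  Ob :> Type;
  Hom : Ob -> Ob -> Type;
  idm : forall a, Hom a a;
  comp : forall a b c, Hom b c -> Hom a b -> Hom a c;
  comp_assoc : forall a b c d (f : Hom a b) (g : Hom b c) (h : Hom c d),
      comp h (comp g f) = comp (comp h g) f;
  comp_id_l : forall a b (f : Hom a b), comp (idm b) f = f;
  comp_id_r : forall a b (f : Hom a b), comp f (idm a) = f
}.

Arguments Hom {c} _ _ : rename.
Arguments idm {c} _ : rename.
Arguments comp {c a b c0} _ _ : rename.

Record Functor (Y X : Category) : Type := {
  fobj :> Y -> X;
  fmap : forall a b, Hom a b -> Hom (fobj a) (fobj b);
  fmap_id : forall a, fmap a a (idm a) = idm (fobj a);
  fmap_comp : forall a b c (f : Hom a b) (g : Hom b c),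
      fmap a c (comp g f) = comp (fmap b c g) (fmap a b f)
}.

Definition isomorphic {C : Category} (a b : C) : Prop :=
  exists (f : Hom a b) (g : Hom b a), comp g f = idm a /\ comp f g = idm b.

Definition locally_initial {C : Category} (x0 : C) : Prop :=
  forall (x : C) (f g : Hom x0 x), f = g.

Definition is_absolute_value {C : Category} (x a : C) : Prop :=
  locally_initial a /\ inhabited (Hom a x) /\
  forall x1 : C, locally_initial x1 -> inhabited (Hom x1 x) -> inhabited (Hom x1 a).

(* objects of the full subcategory Y_G(x0) *)
Definition in_YG {Y X : Category} (G : Functor Y X) (x0 : X) (y : Y) : Prop :=
  inhabited (Hom x0 (G y)).

(* y0 is initial in the full subcategory Y_G(x0) (full: same hom-sets) *)
Definition initial_in_YG {Y X : Category} (G : Functor Y X) (x0 : X) (y0 : Y) : Prop :=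
  in_YG G x0 y0 /\
  forall y : Y, in_YG G x0 y ->
    inhabited (Hom y0 y) /\ forall f g : Hom y0 y, f = g.

(* A locally initial object admitting morphisms to and from another locally
   initial object is isomorphic to it, the two composites being forced to be
   identities.  Given x0 ≅ |Gy|, the object y lies in Y_G(x0), so initiality
   of y0 yields y0 -> y and hence |Gy0| -> Gy0 -> Gy, which factors through
   |Gy| ≅ x0; conversely x0 -> Gy0 factors through |Gy0|. *)

Section Morphisms.

Context {C : Category}.

Lemma inhabited_comp {a b c : C} :
  inhabited (Hom a b) -> inhabited (Hom b c) -> inhabited (Hom a c).
Proof. intros [f] [g]. exact (inhabits (comp g f)). Qed.

Lemma inhabited_hom_of_iso {a b : C} : isomorphic a b -> inhabited (Hom a b).
Proof. intros [f _]. exact (inhabits f). Qed.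

Lemma inhabited_hom_of_iso_inv {a b : C} : isomorphic a b -> inhabited (Hom b a).
Proof. intros [_ [g _]]. exact (inhabits g). Qed.

Lemma locally_initial_iso {a b : C} :
  locally_initial a -> locally_initial b ->
  inhabited (Hom a b) -> inhabited (Hom b a) -> isomorphic a b.
Proof.
  intros Ha Hb [f] [g].
  exists f, g. split; [apply Ha | apply Hb].
Qed.

Lemma absolute_value_hom {x a x1 : C} :
  is_absolute_value x a -> locally_initial x1 ->
  inhabited (Hom x1 x) -> inhabited (Hom x1 a).
Proof. intros [_ [_ Ha]]. apply Ha. Qed.

Lemma absolute_value_monotone {x a x' a' : C} :
  is_absolute_value x a -> is_absolute_value x' a' ->
  inhabited (Hom x x') -> inhabited (Hom a a').
Proof.
  intros Ha Ha' Hxx'.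
  destruct Ha as [Ha_init [Hax _]].
  apply (absolute_value_hom Ha' Ha_init).
  exact (inhabited_comp Hax Hxx').
Qed.

End Morphisms.

Lemma inhabited_fmap {Y X : Category} (G : Functor Y X) {a b : Y} :
  inhabited (Hom a b) -> inhabited (Hom (G a) (G b)).
Proof. intros [f]. exact (inhabits (fmap G a b f)). Qed.

Lemma in_YG_of_iso_abs {Y X : Category} {G : Functor Y X} {x0 a : X} {y : Y} :
  is_absolute_value (G y) a -> isomorphic x0 a -> in_YG G x0 y.
Proof.
  intros [_ [Hay _]] Hiso.
  exact (inhabited_comp (inhabited_hom_of_iso Hiso) Hay).
Qed.

Theorem proposition2p13 (Y X : Category) (G : Functor Y X)
  (abs : X -> X) (habs : forall x : X, is_absolute_value x (abs x))
  (x0 : X) (hx0 : locally_initial x0)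
  (y0 : Y) (hy0 : initial_in_YG G x0 y0) :
  isomorphic x0 (abs (G y0)) <-> exists y : Y, isomorphic x0 (abs (G y)).
Proof.
  split; [intros Hiso; exists y0; exact Hiso |].
  intros [y Hiso].
  destruct hy0 as [Hy0 Hinit].
  assert (Hy0y : inhabited (Hom y0 y)).
  { apply Hinit. exact (in_YG_of_iso_abs (habs (G y)) Hiso). }
  assert (Habs_y0_y : inhabited (Hom (abs (G y0)) (abs (G y)))).
  { apply (absolute_value_monotone (habs (G y0)) (habs (G y))).
    exact (inhabited_fmap G Hy0y). }
  apply locally_initial_iso.
  - exact hx0.
  - apply habs.
  - exact (absolute_value_hom (habs (G y0)) hx0 Hy0).
  - exact (inhabited_comp Habs_y0_y (inhabited_hom_of_iso_inv Hiso)).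
Qed.
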